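(* Let $G$ be a finite group and let $p,q$ be distinct primes dividing $|G|$. Let $m,n$ be positive integers and suppose that $|G| = p^i q^n$ for some integer $i$ with $1 \le i \le m$. If $p \nmid q^n - 1$ and $q \nmid p^{\gcd([m],\, q-1)} - 1$, then $G$ has an abelian subgroup of order $pq$.
   Context: For a positive integer $m$, $[m]$ denotes the least common multiple of $1,2,\dots,m$, i.e. $[m] = \operatorname{lcm}(1,2,\dots,m)$. $\gcd(a,b)$ denotes the greatest common divisor. *)

From mathcomp Require Import all_boot all_order all_fingroup.
Set Implicit Arguments. Unset Strict Implicit. Unset Printing Implicit Defensive.

(* [m] = lcm(1, 2, ..., m), with [0] = 1 (empty lcm). *)
Definition lcm_upto (m : nat) : nat := \big[lcmn/1]_(1 <= k < m.+1) k.

From mathcomp Require Import all_boot all_order all_fingroup.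
From mathcomp Require Import all_solvable.
Set Implicit Arguments. Unset Strict Implicit. Unset Printing Implicit Defensive.

(* Every j in [1, m] divides [m], so by Fermat and Bezout q | p^j - 1 would force
   q | p^(gcd([m], q - 1)) - 1; hence no p^j with 1 <= j <= m is 1 mod q.
   Since the number of Sylow q-subgroups divides p^i and is 1 mod q, the Sylow
   q-subgroup Q is normal.  An element x of order p acts on Q by conjugation,
   and |C_Q(x)| = |Q| = q^n mod p, which is not 1 mod p; so x centralises an
   element y of order q, and <xy> is cyclic of order pq. *)

Lemma dvdn_lcm_upto m j : 0 < j <= m -> j %| lcm_upto m.
Proof.
elim: m => [|m IHm] /andP[j_gt0 le_jm]; first by rewrite leqNgt j_gt0 in le_jm.
rewrite /lcm_upto big_nat_recr //= -/(lcm_upto m).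
have [->|ne_jm] := eqVneq j m.+1; first exact: dvdn_lcmr.
apply: dvdn_trans (dvdn_lcml _ _); apply: IHm.
by rewrite j_gt0 -ltnS ltn_neqAle ne_jm le_jm.
Qed.

Lemma expn_mod1_dvdn x a b d : a %| b -> x ^ a = 1 %[mod d] -> x ^ b = 1 %[mod d].
Proof. by case/dvdnP=> k -> xa1; rewrite mulnC expnM -modnXm xa1 modnXm exp1n. Qed.

Lemma expn_gcdn_mod1 x a b d : 0 < a ->
  x ^ a = 1 %[mod d] -> x ^ b = 1 %[mod d] -> x ^ gcdn a b = 1 %[mod d].
Proof.
move=> a_gt0 xa1 xb1; have [u v def_gcd _] := egcdnP b a_gt0.
have xua1 := expn_mod1_dvdn (dvdn_mull u (dvdnn a)) xa1.
have xvb1 := expn_mod1_dvdn (dvdn_mull v (dvdnn b)) xb1.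
by rewrite -[x ^ gcdn a b]mul1n -modnMml -xvb1 modnMml -expnD -def_gcd xua1.
Qed.

Lemma not_dvdn_expn_subn1 p q m j : prime q -> ~~ (q %| p) -> 0 < j <= m ->
  ~~ (q %| p ^ gcdn (lcm_upto m) (q - 1) - 1) -> ~~ (q %| p ^ j - 1).
Proof.
move=> q_pr q_ndvd_p /andP[j_gt0 le_jm]; apply: contra.
have p_gt0 : 0 < p by case: p q_ndvd_p => //; rewrite dvdn0.
rewrite -!eqn_mod_dvd ?expn_gt0 ?p_gt0 // => /eqP pj1.
have fermat : p ^ (q - 1) = 1 %[mod q].
  rewrite subn1 -totient_prime // Euler_exp_totient //.
  by rewrite coprime_sym prime_coprime.
apply/eqP/(expn_mod1_dvdn _ (expn_gcdn_mod1 j_gt0 pj1 fermat)).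
by rewrite dvdn_gcd dvdn_gcdr andbT (dvdn_trans (dvdn_gcdl _ _)) ?dvdn_lcm_upto ?j_gt0.
Qed.

Lemma card_Syl_eq1 (gT : finGroupType) (G : {group gT}) p q i n :
  prime p -> prime q -> p != q -> #|G| = p ^ i * q ^ n ->
  (forall j, 0 < j <= i -> ~~ (q %| p ^ j - 1)) -> #|'Syl_q(G)%g| = 1.
Proof.
move=> p_pr q_pr neq_pq oG not_1modq.
have cSq : coprime #|'Syl_q(G)%g| q by rewrite -coprime_modl card_Syl_mod // coprime1n.
have : #|'Syl_q(G)%g| %| p ^ i.
  by rewrite -(Gauss_dvdr _ (coprimeXr n cSq)) mulnC -oG card_Syl_dvd.
case/dvdn_pfactor=> // [[|j]] le_ji defS; rewrite defS //.
have /negP[] := not_1modq j.+1 le_ji.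
rewrite -eqn_mod_dvd ?expn_gt0 ?prime_gt0 // -defS card_Syl_mod //.
by rewrite modn_small ?prime_gt1.
Qed.

Lemma cent_pgroup_nontrivial (gT : finGroupType) (p : nat) (A Q : {group gT}) :
  (p.-group A)%g -> (A \subset 'N(Q))%g -> ~~ (p %| #|Q| - 1) -> ('C_Q(A) != 1)%g.
Proof.
move=> pA nQA; apply: contra => /eqP trivC.
have actJ : [acts A, on Q | 'J] by rewrite astabsJ.
have := pgroup_fix_mod pA actJ; rewrite afixJ trivC cards1.
by rewrite -eqn_mod_dvd ?cardG_gt0 // => ->.
Qed.

Theorem theorem2p4 (gT : finGroupType) (G : {group gT}) (p q m n i : nat) :
  prime p -> prime q -> p != q -> p %| #|G| -> q %| #|G| ->
  0 < m -> 0 < n -> 1 <= i <= m ->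
  #|G| = p ^ i * q ^ n ->
  ~~ (p %| q ^ n - 1) ->
  ~~ (q %| p ^ (gcdn (lcm_upto m) (q - 1)) - 1) ->
  exists H : {group gT}, [/\ H \subset G, abelian H & #|H| = p * q].
Proof.
move=> p_pr q_pr neq_pq pG _ _ _ /andP[_ le_im] oG p_ndvd q_ndvd.
have q_ndvd_p : ~~ (q %| p) by rewrite dvdn_prime2 // eq_sym.
have /eqP/normal_sylowP[Q sylQ nsQG] : #|'Syl_q(G)%g| = 1.
  apply: (card_Syl_eq1 p_pr q_pr neq_pq oG) => j /andP[j_gt0 le_ji].
  by apply: (not_dvdn_expn_subn1 q_pr q_ndvd_p _ q_ndvd); rewrite j_gt0 (leq_trans le_ji).
have oQ : #|Q| = q ^ n.
  rewrite (card_Hall sylQ) p_part oG lognM ?expn_gt0 ?prime_gt0 // !lognX.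
  by rewrite !logn_prime // eqxx eq_sym (negbTE neq_pq) muln0 muln1.
have [x Gx ox] := Cauchy p_pr pG.
have ntC : ('C_Q(<[x]>) != 1)%g.
  apply: (@cent_pgroup_nontrivial _ p); rewrite ?oQ //.
    by rewrite /pgroup -orderE ox pnat_id.
  by rewrite cycle_subG (subsetP (normal_norm nsQG)).
have qC : (q.-group 'C_Q(<[x]>))%g := pgroupS (subsetIl _ _) (pHall_pgroup sylQ).
have [_ q_dvd_C _] := pgroup_pdiv qC ntC.
have [y /setIP[Qy /centP cxy] oy] := Cauchy q_pr q_dvd_C.
have Gy : y \in G := subsetP (normal_sub nsQG) y Qy.
exists <[x * y]>%G; split; rewrite ?cycle_abelian ?cycle_subG ?groupM //.
rewrite -orderE orderM ?ox ?oy ?prime_coprime ?dvdn_prime2 //.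
exact/esym/cxy/cycle_id.
Qed.
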